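(* Let $G=(V,E)$ be a claw-free graph, let $v_1,v_2\in V$ with $v_1v_2\notin E$, and let $w_1,w_2\in N(v_1)\cap N(v_2)$ with $w_1w_2\notin E$. Then $N[v_1]\cup N[v_2]=N[w_1]\cup N[w_2]$.
   Context: Graphs are finite, simple, undirected; claw-free means no induced $K_{1,3}$. $N(x)$ is the open and $N[x]=N(x)\cup\{x\}$ the closed neighbourhood of $x$. *)

From mathcomp Require Import all_boot.
Set Implicit Arguments. Unset Strict Implicit. Unset Printing Implicit Defensive.

Definition simple_graph (T : finType) (e : rel T) : Prop :=
  symmetric e /\ irreflexive e.

Definition nbhd (T : finType) (e : rel T) (x : T) : {set T} := [set y | e x y].
Definition cnbhd (T : finType) (e : rel T) (x : T) : {set T} := x |: nbhd e x.

Definition claw_free (T : finType) (e : rel T) : Prop :=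
  forall c a b d : T, e c a -> e c b -> e c d ->
    a != b -> a != d -> b != d ->
    ~~ e a b -> ~~ e a d -> ~~ e b d -> False.

From mathcomp Require Import all_boot.

(* In a claw-free graph a vertex adjacent to two non-adjacent vertices a, b
   has its closed neighbourhood inside N[a] :|: N[b]; otherwise a neighbour
   outside it would form a claw centred at that vertex with a and b. Applying
   this to w1, w2 (common neighbours of v1, v2) and to v1, v2 (common
   neighbours of w1, w2) gives both inclusions. *)

Section ClawFree.

Context {T : finType} {e : rel T}.
Hypotheses (e_sym : symmetric e) (e_claw_free : claw_free e).

Lemma cnbhd_sub_cnbhdU (c a b : T) :
  e c a -> e c b -> a != b -> ~~ e a b ->
  cnbhd e c \subset cnbhd e a :|: cnbhd e b.
Proof.
move=> ca cb ab nab; apply/subsetP => x.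
rewrite !inE => /predU1P [-> | cx]; first by rewrite e_sym ca orbT.
apply/negPn/negP; rewrite !negb_or => /andP [/andP [xa nax] /andP [xb nbx]].
by apply: (e_claw_free _ x a b cx ca cb); rewrite // e_sym.
Qed.

End ClawFree.

Theorem lemma7 (T : finType) (e : rel T) :
  simple_graph e -> claw_free e ->
  forall v1 v2 w1 w2 : T,
    v1 != v2 -> ~~ e v1 v2 ->
    w1 \in nbhd e v1 :&: nbhd e v2 -> w2 \in nbhd e v1 :&: nbhd e v2 ->
    w1 != w2 -> ~~ e w1 w2 ->
    cnbhd e v1 :|: cnbhd e v2 = cnbhd e w1 :|: cnbhd e w2.
Proof.
move=> [sym _] cf v1 v2 w1 w2 v12 nv12 hw1 hw2 w12 nw12.
move: hw1 hw2; rewrite !inE => /andP [v1w1 v2w1] /andP [v1w2 v2w2].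
apply/eqP; rewrite eqEsubset; apply/andP; split; rewrite subUset; apply/andP.
  by split; apply: cnbhd_sub_cnbhdU.
by split; apply: cnbhd_sub_cnbhdU; rewrite // sym.
Qed.
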